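(* Let $3\le p<\omega$ and $0\le n<\omega$. If $2n>p$, then $\mathfrak L(p,n)$ is not representable, i.e. $\mathfrak L(p,n)\notin\mathsf{RRA}$.
   Context: For $3\le p<\omega$, $0\le n<\omega$, $\mathfrak L(p,n)$ is the finite symmetric integral relation algebra with atoms $1',a_0,\dots,a_p,t_1,\dots,t_n$ whose composition of atoms is given, for $0\le i,j\le p$, $i\ne j$, $1\le k,l\le n$, $k\ne l$, by: $a_i;a_i=1'+a_i$; $a_i;a_j=0'\cdot\overline{a_i+a_j}$ (where $0'=\overline{1'}$); $a_i;t_k=t_1+\cdots+t_n$; $t_k;t_k=1'+a_0+\cdots+a_p$; $t_k;t_l=a_0+\cdots+a_p$. $\mathsf{RRA}$ is the class of relation algebras having a representation, i.e. an injective map into $\mathcal P(U)$ for an equivalence relation $U$ on some set, sending the Boolean operations to set operations relative to $U$, $1'$ to the identity relation, converse to relational converse and $;$ to relational composition. *)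

From HB Require Import structures.
From mathcomp Require Import all_boot.
Set Implicit Arguments. Unset Strict Implicit. Unset Printing Implicit Defensive.

(* Atoms of L(p,n): None = 1', Some (inl i) = a_i (0 <= i <= p),
   Some (inr k) = t_(k+1) (1 <= k+1 <= n). *)
Definition atom (p n : nat) : finType := option ('I_p.+1 + 'I_n)%type.

Definition isA p n (z : atom p n) : bool :=
  if z is Some (inl _) then true else false.
Definition isT p n (z : atom p n) : bool :=
  if z is Some (inr _) then true else false.

Definition comp_atom p n (x y : atom p n) : {set atom p n} :=
  match x, y with
  | None, _ => [set y]
  | _, None => [set x]
  | Some (inl i), Some (inl j) =>
      if i == j then [set None; x]
      else [set z | (z != None) && (z != x) && (z != y)]        (* 0' . -(a_i + a_j) *)
  | Some (inl _), Some (inr _) => [set z | isT z]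
  | Some (inr _), Some (inl _) => [set z | isT z]
  | Some (inr k), Some (inr l) =>
      if k == l then [set z | (z == None) || isA z]
      else [set z | isA z]
  end.

Definition L_elt (p n : nat) := {set atom p n}.
Definition L_join p n (A B : L_elt p n) : L_elt p n := A :|: B.
Definition L_meet p n (A B : L_elt p n) : L_elt p n := A :&: B.
Definition L_compl p n (A : L_elt p n) : L_elt p n := ~: A.
Definition L_zero p n : L_elt p n := set0.
Definition L_one p n : L_elt p n := setT.
Definition L_id p n : L_elt p n := [set None].
(* all atoms are symmetric, so converse is the identity map *)
Definition L_conv p n (A : L_elt p n) : L_elt p n := A.
Definition L_comp p n (A B : L_elt p n) : L_elt p n :=
  \bigcup_(x in A) \bigcup_(y in B) comp_atom x y.

Definition is_representation p n (X : Type) (U : X -> X -> Prop)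
    (h : L_elt p n -> X -> X -> Prop) : Prop :=
  ((forall x, U x x) /\ (forall x y, U x y -> U y x)
        /\ (forall x y z, U x y -> U y z -> U x z)) /\
      (forall A B, (forall x y, h A x y <-> h B x y) -> A = B) /\
      (forall A x y, h A x y -> U x y) /\
      (forall A B x y, h (L_join A B) x y <-> (h A x y \/ h B x y))
        /\ (forall A B x y, h (L_meet A B) x y <-> (h A x y /\ h B x y)) /\
      (forall A x y, h (L_compl A) x y <-> (U x y /\ ~ h A x y))
        /\ (forall x y, h (L_zero p n) x y <-> False)
        /\ (forall x y, h (L_one p n) x y <-> U x y) /\
      (forall x y, h (L_id p n) x y <-> x = y)
        /\ (forall A x y, h (L_conv A) x y <-> h A y x) /\
      (forall A B x y, h (L_comp A B) x y <-> exists z, h A x z /\ h B z y).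

Definition representable (p n : nat) : Prop :=
  exists (X : Type) (U : X -> X -> Prop) (h : L_elt p n -> X -> X -> Prop),
    is_representation U h.

From mathcomp Require Import all_boot.
From Stdlib Require Import IndefiniteDescription.

Set Implicit Arguments. Unset Strict Implicit. Unset Printing Implicit Defensive.

(* In a representation every related pair (u,v) carries exactly one atom, and
   composition/decomposition of atoms can be read off the atom table.  Fix a
   point x, a t_0-neighbour y of x and a point w with t_0(x,w), a_1(w,y).
   Since t_l <= t_l';a_0 for all l, l', there are z_l, z'_l with t_l(x,z_l),
   a_0(z_l,y), t_l(x,z'_l), a_0(z'_l,z_l).  As 1'+a_0 is an equivalence, these
   2n points P_i are distinct and pairwise a_0-related, all in the class of y.
   Each P_i is joined to w by t;t = 1' + a_0 + ... + a_p, but not by 1' + a_0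
   (that would put w in the class of y), so by some a_j with j <> 0.  Two P_i
   sharing a colour j would be both (1'+a_j)- and (1'+a_0)-related, hence equal.
   So i ↦ j injects 2n points into p colours: 2n <= p. *)

Section AtomTable.
Variables p n : nat.

Definition a_atom (j : 'I_p.+1) : atom p n := Some (inl j).
Definition t_atom (l : 'I_n) : atom p n := Some (inr l).
Definition refl_a (j : 'I_p.+1) : L_elt p n := [set None; a_atom j].

Lemma L_comp1 (c d : atom p n) : L_comp [set c] [set d] = comp_atom c d.
Proof. by rewrite /L_comp !big_set1. Qed.

Lemma id_in_comp_tt (l : 'I_n) : None \in comp_atom (t_atom l) (t_atom l).
Proof. by rewrite /= eqxx !inE. Qed.

Lemma t_in_comp_ta (l l' : 'I_n) (j : 'I_p.+1) :
  t_atom l' \in comp_atom (t_atom l) (a_atom j).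
Proof. by rewrite inE. Qed.

Lemma comp_tt_cases (l l' : 'I_n) (c : atom p n) :
  c \in comp_atom (t_atom l) (t_atom l') -> c = None \/ exists j, c = a_atom j.
Proof.
by case: c => [[j|k]|] /=; [right; exists j | case: eqP; rewrite inE | left].
Qed.

Lemma comp_aa (j : 'I_p.+1) : comp_atom (a_atom j) (a_atom j) = refl_a j.
Proof. by rewrite /= eqxx. Qed.

Lemma comp_refl_a (j : 'I_p.+1) : L_comp (refl_a j) (refl_a j) \subset refl_a j.
Proof.
apply/bigcupsP => c; rewrite !inE => /orP[]/eqP->; apply/bigcupsP => d;
  rewrite !inE => /orP[]/eqP->; rewrite ?comp_aa //=;
  by apply/subsetP => z; rewrite !inE => /eqP->; rewrite eqxx ?orbT.
Qed.

End AtomTable.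

Arguments a_atom {p n}.
Arguments t_atom {p n}.
Arguments refl_a {p n}.
Arguments id_in_comp_tt {p n}.
Arguments comp_aa {p n}.
Arguments comp_refl_a {p n}.

Section Representation.
Variables (p n : nat) (X : Type) (U : X -> X -> Prop).
Variable h : L_elt p n -> X -> X -> Prop.
Hypothesis Hr : is_representation U h.

Lemma rep_join (A B : L_elt p n) x y : h (A :|: B) x y <-> h A x y \/ h B x y.
Proof. by case: Hr => _ [_ [_ [Hj _]]]; apply: Hj. Qed.

Lemma rep_meet (A B : L_elt p n) x y : h (A :&: B) x y <-> h A x y /\ h B x y.
Proof. by case: Hr => _ [_ [_ [_ [Hm _]]]]; apply: Hm. Qed.

Lemma rep_zero x y : ~ h set0 x y.
Proof. by case: Hr => _ [_ [_ [_ [_ [_ [H0 _]]]]]] /H0. Qed.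

Lemma rep_id x y : h [set None] x y <-> x = y.
Proof. by case: Hr => _ [_ [_ [_ [_ [_ [_ [_ [Hi _]]]]]]]]; apply: Hi. Qed.

(* All elements of L(p,n) are symmetric, so their images are. *)
Lemma rep_sym (A : L_elt p n) x y : h A x y -> h A y x.
Proof. by case: Hr => _ [_ [_ [_ [_ [_ [_ [_ [_ [Hv _]]]]]]]]] /Hv. Qed.

Lemma rep_comp (A B : L_elt p n) x y :
  h (L_comp A B) x y <-> exists z, h A x z /\ h B z y.
Proof. by case: Hr => _ [_ [_ [_ [_ [_ [_ [_ [_ [_ Hc]]]]]]]]]; apply: Hc. Qed.

(* The base set of a representation is nonempty, since 1' <> 0. *)
Lemma rep_base_nonempty : ~ (X -> False).
Proof.
move=> noX; case: Hr => _ [inj_h _].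
have /setP/(_ None) : L_id p n = L_zero p n by apply: inj_h => x; case: (noX x).
by rewrite !inE.
Qed.

Lemma rep_mono (A B : L_elt p n) x y : A \subset B -> h A x y -> h B x y.
Proof. by move=> /setUidPr <- hA; apply/rep_join; left. Qed.

Lemma rep_atom (A : L_elt p n) x y : h A x y -> exists2 c, c \in A & h [set c] x y.
Proof.
elim: {A}#|A| {-2}A (erefl #|A|) => [|m IH] A cardA hA.
  by move: hA; rewrite (cards0_eq cardA) => /rep_zero.
have [c cA] : exists c, c \in A by apply/set0Pn; rewrite -card_gt0 cardA.
have cardAc : #|A :\ c| = m by move: cardA; rewrite (cardsD1 c) cA => -[].
move: hA; rewrite -{1}(setD1K cA) => /rep_join [hc | /(IH _ cardAc) [d dAc hd]].
  by exists c.
by exists d => //; move: dAc; rewrite inE => /andP[].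
Qed.

Lemma atom_unique (c d : atom p n) x y : h [set c] x y -> h [set d] x y -> c = d.
Proof.
move=> hc hd; case: (eqVneq c d) => // neq_cd; exfalso.
have disj_cd : [set c] :&: [set d] = set0.
  by apply/setP => z; rewrite !inE; case: eqP => // ->; rewrite (negbTE neq_cd).
by apply: (@rep_zero x y); rewrite -disj_cd; apply/rep_meet.
Qed.

Lemma atom_diag (c : atom p n) x : h [set c] x x -> c = None.
Proof. by move=> hc; apply: atom_unique hc _; apply/rep_id. Qed.

Lemma atom_comp (c d : atom p n) x z y : h [set c] x z -> h [set d] z y ->
  exists2 e, e \in comp_atom c d & h [set e] x y.
Proof.
by move=> hc hd; apply: rep_atom; rewrite -L_comp1; apply/rep_comp; exists z.
Qed.

Lemma atom_decomp (c d e : atom p n) x y : e \in comp_atom c d -> h [set e] x y ->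
  exists z, h [set c] x z /\ h [set d] z y.
Proof.
by move=> ecd he; apply/rep_comp; rewrite L_comp1; apply: rep_mono he; rewrite sub1set.
Qed.

(* 1' + a_j is represented by an equivalence relation (reflexive and symmetric
   by rep_id and rep_sym). *)
Lemma refl_a_trans (j : 'I_p.+1) x z y :
  h (refl_a j) x z -> h (refl_a j) z y -> h (refl_a j) x y.
Proof. by move=> hxz hzy; apply: rep_mono (comp_refl_a j) _; apply/rep_comp; exists z. Qed.

Lemma a_not_refl_a (j k : 'I_p.+1) x y :
  j != k -> h [set a_atom j] x y -> ~ h (refl_a k) x y.
Proof.
move=> neq_jk ha /rep_atom [c]; rewrite !inE => /orP[]/eqP-> /(atom_unique ha) //.
by case=> ejk; rewrite ejk eqxx in neq_jk.
Qed.

Lemma refl_a_meet (j k : 'I_p.+1) x y :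
  j != k -> h (refl_a j) x y -> h (refl_a k) x y -> x = y.
Proof.
move=> neq_jk /rep_atom [c]; rewrite !inE => /orP[]/eqP-> hc.
  by move=> _; apply/rep_id.
by move/(a_not_refl_a neq_jk hc).
Qed.

Lemma t_clique (k : 'I_p.+1) (l0 : 'I_n) x y : h [set t_atom l0] x y ->
  exists P : 'I_n * bool -> X,
    [/\ injective P, forall i, h [set t_atom i.1] x (P i)
      & forall i, h (refl_a k) (P i) y].
Proof.
move=> hxy.
have near l : exists z, h [set t_atom l] x z /\ h [set a_atom k] z y.
  by apply: atom_decomp hxy; apply: t_in_comp_ta.
have [z hz] := functional_choice _ near.
have far l : exists z', h [set t_atom l] x z' /\ h [set a_atom k] z' (z l).
  by apply: atom_decomp (hz l).1; apply: t_in_comp_ta.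
have [z' hz'] := functional_choice _ far.
have inA u v : h [set a_atom k] u v -> h (refl_a k) u v.
  by apply: rep_mono; rewrite sub1set !inE eqxx orbT.
pose P (i : 'I_n * bool) := if i.2 then z' i.1 else z i.1.
have tP i : h [set t_atom i.1] x (P i) by case: i => l [] /=; [case: (hz' l) | case: (hz l)].
have yP i : h (refl_a k) (P i) y.
  case: i => l []; rewrite /P /=; last exact: inA (hz l).2.
  exact: refl_a_trans (inA _ _ (hz' l).2) (inA _ _ (hz l).2).
exists P; split=> // [[l b] [l' b'] ePP].
have := tP (l', b'); rewrite -ePP => /(atom_unique (tP (l, b))) [ell].
subst l'; congr pair.
have sep : z' l <> z l.
  move=> e; have /atom_diag // : h [set a_atom k] (z l) (z l).
  by rewrite -{1}e; case: (hz' l).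
by case: b b' ePP {tP} => -[] //; rewrite /P /= => ePP; case: sep; rewrite ePP.
Qed.

Lemma tt_colour (k : 'I_p.+1) (l l' : 'I_n) x w u :
  h [set t_atom l] x w -> h [set t_atom l'] x u -> ~ h (refl_a k) w u ->
  exists j, j != k /\ h [set a_atom j] w u.
Proof.
move=> hxw hxu not_k; have [c /comp_tt_cases hc hcw] := atom_comp (rep_sym hxw) hxu.
have in_k d : d \in refl_a k -> h [set d] w u -> False.
  by move=> dk hd; apply: not_k; apply: rep_mono hd; rewrite sub1set.
case: hc => [ec | [j ec]]; subst c; first by case: (in_k None); rewrite ?setU11.
exists j; split => //; apply/negP => /eqP ejk; subst j.
by apply: (in_k (a_atom k)); rewrite // !inE eqxx orbT.
Qed.

Lemma colour_bound (k : 'I_p.+1) (w : X) (I : finType) (P : I -> X) :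
  injective P -> (forall i i', h (refl_a k) (P i) (P i')) ->
  (forall i, exists j, j != k /\ h [set a_atom j] w (P i)) -> #|I| <= p.
Proof.
move=> injP clique colours; have [g hg] := functional_choice _ colours.
have inj_g : injective g.
  move=> i i' egg; apply: injP; apply: (refl_a_meet (hg i).1 _ (clique i i')).
  rewrite -comp_aa -L_comp1; apply/rep_comp; exists w.
  by split; [apply: rep_sym; case: (hg i) | rewrite egg; case: (hg i')].
have : #|g @: I| <= #|[set~ k]|.
  by apply/subset_leq_card/subsetP => _ /imsetP[i _ ->]; rewrite !inE; case: (hg i).
by rewrite card_imset // cardsC1 card_ord.
Qed.

End Representation.

Theorem corollary7 (p n : nat) : 3 <= p -> p < 2 * n -> ~ representable p n.
Proof.
move=> p_ge3 lt_p_2n [X [U [h Hr]]].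
have n_gt0 : 0 < n by have [n0 | //] := posnP n; rewrite n0 muln0 in lt_p_2n.
have lt_1_p1 : 1 < p.+1 by rewrite ltnS (leq_trans _ p_ge3).
pose l0 : 'I_n := Ordinal n_gt0.
pose k : 'I_p.+1 := ord0.
apply: (rep_base_nonempty Hr) => x.
have [y [hxy _]] := atom_decomp Hr (id_in_comp_tt (p:=p) l0)
  (proj2 (rep_id Hr x x) erefl).
have [w [hxw hwy]] := atom_decomp Hr (t_in_comp_ta l0 l0 (Ordinal lt_1_p1)) hxy.
have [P [injP tP yP]] := t_clique Hr k hxy.
have wy : ~ h (refl_a k) w y by exact: (a_not_refl_a Hr _ hwy).
have pairwise i i' : h (refl_a k) (P i) (P i').
  exact: (refl_a_trans Hr (yP i) (rep_sym Hr (yP i'))).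
have colours i : exists j, j != k /\ h [set a_atom j] w (P i).
  by apply: (tt_colour Hr hxw (tP i)) => hwP; apply/wy/(refl_a_trans Hr hwP (yP i)).
have := colour_bound Hr injP pairwise colours.
by rewrite card_prod card_ord card_bool mulnC leqNgt lt_p_2n.
Qed.
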